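(* Let $n,N\ge1$ and positive integers $r_1,\dots,r_N,r$ with $r_i\le r\le\lfloor(n-1)/2\rfloor$. Consider either (a) $d=n$, $p=r_i+1$, $q=n-r_i$ for some $i$, and $\mathcal{A}(y)=\mathcal{H}_{r_i+1}(y)$ for $y\in\mathbb{R}^n$; or (b) $d=Nn$, $p=r+1$, $q=N(n-r)$, and $\mathcal{A}(y)=[\mathcal{H}_{r+1}(y_1)\cdots\mathcal{H}_{r+1}(y_N)]$ for $y=(y_1^\top,\dots,y_N^\top)^\top\in\mathbb{R}^{Nn}$. Then for any $U\in\mathbb{R}^{1\times q}$ and any $R\in\mathbb{R}^{1\times p}\setminus\{0\}$, if $\mathcal{A}^*(R^\top U)=0$ then $U=0$.
   Context: For $x\in\mathbb{R}^n$ and $1\le l\le n$, $\mathcal{H}_l(x)\in\mathbb{R}^{l\times(n-l+1)}$ is the Hankel matrix with $(i,j)$ entry $x(i+j-1)$. $\mathcal{A}^*:\mathbb{R}^{p\times q}\to\mathbb{R}^d$ is the adjoint of the linear map $\mathcal{A}:\mathbb{R}^d\to\mathbb{R}^{p\times q}$ with respect to the standard (Frobenius) inner products. *)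

From HB Require Import structures.
From mathcomp Require Import all_boot all_order all_algebra.
From mathcomp Require Import reals.
Set Implicit Arguments. Unset Strict Implicit. Unset Printing Implicit Defensive.
Import Order.TTheory GRing.Theory Num.Theory.
Local Open Scope ring_scope.

(* Vectors of R^n are column vectors 'cV[R]_n; all indices are 0-based. *)

(* total accessor: k-th entry of x (0-based), 0 if out of range *)
Definition vget (R : realType) (n : nat) (x : 'cV[R]_n) (k : nat) : R :=
  if insub k is Some i then x i 0 else 0.

Definition mget (R : realType) (p q : nat) (M : 'M[R]_(p, q)) (i j : nat) : R :=
  match insub i, insub j with Some i', Some j' => M i' j' | _, _ => 0 end.

(* Hankel matrix H_l(x) in R^{l x (n-l+1)}, (i,j) entry x(i+j-1) in 1-based
   indexing, i.e. x(i+j) in 0-based indexing. *)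
Definition hankel (R : realType) (n l : nat) (x : 'cV[R]_n) : 'M[R]_(l, n - l + 1) :=
  \matrix_(i < l, j < n - l + 1) vget x (i + j).

Definition frob (R : realType) (p q : nat) (M N : 'M[R]_(p, q)) : R :=
  \sum_(i < p) \sum_(j < q) M i j * N i j.

(* Adjoint of a linear map A : R^d -> R^{p x q} w.r.t. the standard inner
   products: the k-th coordinate of A^*(M) is <A(e_k), M>_F, e_k the k-th
   standard basis vector. *)
Definition adjoint (R : realType) (d p q : nat) (A : 'cV[R]_d -> 'M[R]_(p, q))
  (M : 'M[R]_(p, q)) : 'cV[R]_d :=
  \col_(k < d) frob (A (delta_mx k 0)) M.

(* k-th block y_k (0-based k) of y = (y_1^T, ..., y_N^T)^T in R^{N n} *)
Definition yblock (R : realType) (N n : nat) (y : 'cV[R]_(N * n)) (k : nat) : 'cV[R]_n :=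
  \col_(m < n) vget y (k * n + m).

(* A(y) = [H_{r+1}(y_1) ... H_{r+1}(y_N)] in R^{(r+1) x N(n-r)}: column j lies in
   block j %/ (n-r), at column j %% (n-r) of that block. *)
Definition stacked_hankel (R : realType) (N n r : nat) (y : 'cV[R]_(N * n))
  : 'M[R]_(r.+1, N * (n - r)) :=
  \matrix_(i < r.+1, j < N * (n - r))
     mget (hankel r.+1 (yblock y (j %/ (n - r)))) i (j %% (n - r)).

From HB Require Import structures.
From mathcomp Require Import all_boot all_order all_algebra.
From mathcomp Require Import reals.
From mathcomp Require Import zify.
Set Implicit Arguments. Unset Strict Implicit. Unset Printing Implicit Defensive.
Import Order.TTheory GRing.Theory Num.Theory.

(* Identify a row vector v with the polynomial rVpoly v whose coefficients are
   its entries.  The k-th coordinate of A^*(Rw^T U) is sum_{i+j=k} Rw_i U_j, the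
   k-th coefficient of Rw(x) U(x); since this product has degree < n,
   A^*(Rw^T U) = 0 says that Rw(x) U(x) = 0 in the integral domain R[x], hence
   U(x) = 0 because Rw(x) != 0.  In case (b) the same argument applies to each
   block of U. *)

Lemma divn_block M b c : c < M -> (b * M + c) %/ M = b.
Proof. by move=> cM; rewrite divnMDl ?divn_small ?addn0 //; apply: leq_ltn_trans cM. Qed.

Lemma modn_block M b c : c < M -> (b * M + c) %% M = c.
Proof. by move=> cM; rewrite modnMDl modn_small. Qed.

Lemma eqn_block M b b' c c' : c < M -> c' < M ->
  (b * M + c == b' * M + c') = (b == b') && (c == c').
Proof.
move=> cM c'M; apply/eqP/andP => [E|[/eqP-> /eqP->] //]; split; apply/eqP.
  by rewrite -(divn_block b cM) E divn_block.
by rewrite -(modn_block b cM) E modn_block.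
Qed.

Fact block_ord_subproof N M (b : 'I_N) (c : 'I_M) : b * M + c < N * M.
Proof.
apply: (@leq_trans (b.+1 * M)); first by rewrite mulSnr ltn_add2l.
by rewrite leq_mul2r ltn_ord orbT.
Qed.

Definition block_ord N M (b : 'I_N) (c : 'I_M) : 'I_(N * M) :=
  Ordinal (block_ord_subproof b c).

Lemma block_ord_bij N M : bijective (uncurry (@block_ord N M)).
Proof.
apply: inj_card_bij; last by rewrite card_prod !card_ord.
move=> [b c] [b' c'] /(congr1 val)/eqP /=.
by rewrite eqn_block // => /andP[/eqP/val_inj-> /eqP/val_inj->].
Qed.

Local Open Scope ring_scope.

Lemma big_block_ord (V : nmodType) N M (F : 'I_(N * M) -> V) :
  \sum_(j < N * M) F j = \sum_(b < N) \sum_(c < M) F (block_ord b c).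
Proof.
rewrite pair_big (reindex (uncurry (@block_ord N M))); last first.
  exact: onW_bij (block_ord_bij N M).
by apply: eq_bigr => -[].
Qed.

Lemma coef_rVpoly_mul (R : comNzRingType) p q (a : 'rV[R]_p) (b : 'rV[R]_q) m :
  (rVpoly a * rVpoly b)`_m =
    \sum_(i < p) \sum_(j < q) (i + j == m)%N%:R * (a 0 i * b 0 j).
Proof.
rewrite /rVpoly !poly_def mulr_suml coef_sum; apply: eq_bigr => i _.
rewrite valK mulr_sumr coef_sum; apply: eq_bigr => j _.
by rewrite valK -scalerAl -scalerAr scalerA -exprD coefZ coefXn eq_sym mulrC.
Qed.

Lemma rVpoly_mul_eq0 (R : idomainType) p q (a : 'rV[R]_p) (b : 'rV[R]_q) :
  a != 0 -> (forall m, (m < (p + q).-1)%N -> (rVpoly a * rVpoly b)`_m = 0) ->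
  b = 0.
Proof.
move=> a_neq0 low_coef0.
have ab0 : rVpoly a * rVpoly b = 0.
  apply/polyP => m; rewrite coef0; case: (ltnP m (p + q).-1) => [/low_coef0 //|hm].
  apply/nth_default/(leq_trans (size_polyMleq _ _))/(leq_trans _ hm).
  by rewrite -!subn1 leq_sub2r // leq_add ?size_poly.
have rVpoly_eq0 d (v : 'rV[R]_d) : rVpoly v = 0 -> v = 0.
  by move=> v0; apply: (can_inj rVpolyK); rewrite v0 linear0.
have /negPf pa_neq0 : rVpoly a != 0 by apply: contra_neq a_neq0 => /rVpoly_eq0.
by apply/rVpoly_eq0/eqP; move/eqP: ab0; rewrite mulf_eq0 pa_neq0.
Qed.

Section HankelAdjoint.

Variable R : realType.

Lemma vget_delta d (k : 'I_d) t : vget (delta_mx k 0 : 'cV[R]_d) t = (t == k)%:R.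
Proof.
rewrite /vget; case: insubP => [i _ <-|t_out]; first by rewrite mxE eqxx andbT.
by case: eqP t_out => // ->; rewrite ltn_ord.
Qed.

Lemma adjoint_hankel_rank1 l n (a : 'rV[R]_l) (b : 'rV[R]_(n - l + 1)) (k : 'I_n) :
  adjoint (fun y : 'cV[R]_n => hankel l y) (a^T *m b) k 0 = (rVpoly a * rVpoly b)`_k.
Proof.
rewrite mxE coef_rVpoly_mul; apply: eq_bigr => i _; apply: eq_bigr => j _.
by rewrite !mxE big_ord1 !mxE vget_delta.
Qed.

Lemma hankel_adjoint_rank1_eq0 l n (a : 'rV[R]_l) (b : 'rV[R]_(n - l + 1)) :
  (l <= n)%N -> a != 0 ->
  adjoint (fun y : 'cV[R]_n => hankel l y) (a^T *m b) = 0 -> b = 0.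
Proof.
move=> l_le_n a_neq0 adj0; apply: (rVpoly_mul_eq0 a_neq0) => m.
have -> : (l + (n - l + 1)).-1 = n by lia.
by move=> mn; rewrite -(adjoint_hankel_rank1 a b (Ordinal mn)) adj0 mxE.
Qed.

Lemma vget_yblock N n (y : 'cV[R]_(N * n)) b s :
  (s < n)%N -> vget (yblock y b) s = vget y (b * n + s).
Proof. by move=> sn; rewrite {1}/vget insubT mxE. Qed.

Lemma mget_hankel n l (x : 'cV[R]_n) (i : 'I_l) c :
  (c < n - l + 1)%N -> mget (hankel l x) i c = vget x (i + c).
Proof. by move=> cl; rewrite /mget valK insubT mxE. Qed.

Lemma stacked_hankelE N n r (y : 'cV[R]_(N * n)) (i : 'I_r.+1) (b : 'I_N)
    (c : 'I_(n - r)) :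
  stacked_hankel r y i (block_ord b c) = vget y (b * n + (i + c)).
Proof.
have := ltn_ord i; have := ltn_ord c => cr ir.
by rewrite mxE divn_block // modn_block // mget_hankel ?vget_yblock //; lia.
Qed.

Definition row_block N M (U : 'rV[R]_(N * M)) (b : 'I_N) : 'rV[R]_M :=
  \row_c U 0 (block_ord b c).

Lemma adjoint_stacked_hankel_rank1 N n r (a : 'rV[R]_r.+1)
    (U : 'rV[R]_(N * (n - r))) (b : 'I_N) (s : 'I_n) :
  adjoint (fun y : 'cV[R]_(N * n) => stacked_hankel r y) (a^T *m U)
    (block_ord b s) 0 = (rVpoly a * rVpoly (row_block U b))`_s.
Proof.
rewrite mxE coef_rVpoly_mul; apply: eq_bigr => i _.
rewrite big_block_ord (bigD1 b) //= [X in _ + X]big1 ?addr0 => [|b' b'_neq_b].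
  apply: eq_bigr => c _; have := ltn_ord i; have := ltn_ord c => cr ir.
  by rewrite stacked_hankelE !mxE big_ord1 !mxE vget_delta eqn_block ?eqxx //; lia.
apply: big1 => c _; have := ltn_ord i; have := ltn_ord c => cr ir.
rewrite stacked_hankelE vget_delta eqn_block //; last by lia.
by move: b'_neq_b; rewrite -val_eqE => /negPf-> ; rewrite mul0r.
Qed.

Lemma stacked_hankel_adjoint_rank1_eq0 N n r (a : 'rV[R]_r.+1)
    (U : 'rV[R]_(N * (n - r))) :
  (r <= n)%N -> a != 0 ->
  adjoint (fun y : 'cV[R]_(N * n) => stacked_hankel r y) (a^T *m U) = 0 ->
  U = 0.
Proof.
move=> r_le_n a_neq0 adj0.
have row_block0 b : row_block U b = 0.
  apply: (rVpoly_mul_eq0 a_neq0) => m.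
  have -> : (r.+1 + (n - r)).-1 = n by lia.
  by move=> mn; rewrite -(adjoint_stacked_hankel_rank1 a U b (Ordinal mn)) adj0 mxE.
apply/rowP => j; have [unblock _ unblockK] := block_ord_bij N (n - r).
rewrite -[j]unblockK; case: (unblock j) => b c /=.
by have /rowP/(_ c) := row_block0 b; rewrite !mxE.
Qed.

End HankelAdjoint.

Theorem lemma4p1 (R : realType) (n N : nat) (rs : 'I_N -> nat) (r : nat) :
  (1 <= n)%N -> (1 <= N)%N ->
  (forall i, 0 < rs i)%N -> (0 < r)%N ->
  (forall i, rs i <= r)%N -> (r <= (n - 1) %/ 2)%N ->
  (* case (a) *)
  (forall (i : 'I_N) (U : 'rV[R]_(n - (rs i).+1 + 1)) (Rw : 'rV[R]_((rs i).+1)),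
     Rw != 0 ->
     adjoint (fun y : 'cV[R]_n => hankel (rs i).+1 y) (Rw^T *m U) = 0 ->
     U = 0)
  /\
  (* case (b) *)
  (forall (U : 'rV[R]_(N * (n - r))) (Rw : 'rV[R]_(r.+1)),
     Rw != 0 ->
     adjoint (fun y : 'cV[R]_(N * n) => @stacked_hankel R N n r y) (Rw^T *m U) = 0 ->
     U = 0).
Proof.
move=> n_ge1 _ _ _ rs_le_r r_le_half.
have r_lt_n : (r < n)%N by lia.
split=> [i U Rw | U Rw].
  apply: hankel_adjoint_rank1_eq0; have := rs_le_r i; lia.
exact/stacked_hankel_adjoint_rank1_eq0/ltnW.
Qed.
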